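(* If the event $E^f(t)$ holds, then $$|I_{t-1}(\mathbf{x})-EI_{t-1}(\mathbf{x})|\le c_\alpha\beta_t^{1/2}\sigma_{t-1}(\mathbf{x})\quad\text{for all }\mathbf{x}\in\mathbb{C}_t,$$ where $c_\alpha=1.328$.
   Context: Setting: $d\ge1$, $r>0$, $C\subseteq[0,r]^d$ compact, $k$ a positive semidefinite kernel with $k(\mathbf{x},\mathbf{x}')\le1$, $k(\mathbf{x},\mathbf{x})=1$ on $C$; $f$ is a sample path of $GP(0,k)$, Lipschitz with constant $L\ge1/(rd)$ in $\ell_1$-norm. Noisy observations $y_i=f(\mathbf{x}_i)+\epsilon_i$, $\epsilon_i$ i.i.d. $\mathcal{N}(0,\sigma^2)$; $\mu_{t-1}$ and $\sigma_{t-1}$ are the GP posterior mean and standard deviation given the first $t-1$ observations; $\xi^+_{t-1}$ is the incumbent (BPMI $\min_{C}\mu_{t-1}$, BSPMI $\min_{i\le t-1}\mu_{t-1}(\mathbf{x}_i)$, or BOI $\min_{i\le t-1}y_i$). $I_{t-1}(\mathbf{x})=\max\{\xi^+_{t-1}-f(\mathbf{x}),0\}$, $EI_{t-1}(\mathbf{x})=(\xi^+_{t-1}-\mu_{t-1}(\mathbf{x}))\Phi(z)+\sigma_{t-1}(\mathbf{x})\phi(z)$ with $z=(\xi^+_{t-1}-\mu_{t-1}(\mathbf{x}))/\sigma_{t-1}(\mathbf{x})$, $\phi,\Phi$ standard normal pdf/cdf. $\mathbb{C}_t\subseteq C$ is finite with $|\mathbb{C}_t|=(Lrdt^2)^d$;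 with $\delta\in(0,1)$, $\pi_t=\pi^2t^2/6$, $\beta_t=2\log(8|\mathbb{C}_t|\pi_t/\delta)$. $E^f(t)$ is the event that $|f(\mathbf{x})-\mu_{t-1}(\mathbf{x})|\le\beta_t^{1/2}\sigma_{t-1}(\mathbf{x})$ for all $\mathbf{x}\in\mathbb{C}_t$. *)

From HB Require Import structures.
From mathcomp Require Import all_boot all_order all_algebra.
From mathcomp Require Import all_classical all_reals all_analysis.
Set Implicit Arguments. Unset Strict Implicit. Unset Printing Implicit Defensive.
Import Order.TTheory GRing.Theory Num.Theory.
Import numFieldNormedType.Exports.
Local Open Scope classical_set_scope.
Local Open Scope ring_scope.

Section GPDefs.
Variable R : realType.

Definition std_normal_pdf (z : R) : R :=
  expR (- (z ^+ 2) / 2) / Num.sqrt (2 * pi).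

Definition std_normal_cdf (z : R) : R :=
  fine (\int[@lebesgue_measure R]_(u in `]-oo, z]) (std_normal_pdf u)%:E)%E.

Definition psd_kernel (X : Type) (k : X -> X -> R) : Prop :=
  (forall x x', k x x' = k x' x) /\
  (forall (n : nat) (xs : 'I_n -> X) (a : 'I_n -> R),
      0 <= \sum_(i < n) \sum_(j < n) a i * a j * k (xs i) (xs j)).

Variable d : nat.
Notation pt := 'rV[R]_d.

Definition l1norm (x : pt) : R := \sum_(i < d) `|x ord0 i|.

Definition gram n (k : pt -> pt -> R) (xs : 'I_n -> pt) : 'M[R]_n :=
  \matrix_(i, j) k (xs i) (xs j).

Definition kvec n (k : pt -> pt -> R) (xs : 'I_n -> pt) (x : pt) : 'cV[R]_n :=
  \col_i k (xs i) x.

Definition post_mean n (k : pt -> pt -> R) (s2 : R) (xs : 'I_n -> pt)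
  (ys : 'I_n -> R) (x : pt) : R :=
  ((kvec k xs x)^T *m invmx (gram k xs + s2%:M) *m (\col_i ys i)) ord0 ord0.

Definition post_var n (k : pt -> pt -> R) (s2 : R) (xs : 'I_n -> pt) (x : pt) : R :=
  k x x - ((kvec k xs x)^T *m invmx (gram k xs + s2%:M) *m kvec k xs x) ord0 ord0.

Definition post_sd n (k : pt -> pt -> R) (s2 : R) (xs : 'I_n -> pt) (x : pt) : R :=
  Num.sqrt (post_var k s2 xs x).

Inductive incumbent_kind := BPMI | BSPMI | BOI.

(* minima written as infima: for the finite (nonempty) sets they are minima;
   for BPMI it is min_C mu_{t-1} (an infimum if the min is not attained). *)
Definition incumbent (ik : incumbent_kind) n (C : set pt) (mu : pt -> R)
  (xs : 'I_n -> pt) (ys : 'I_n -> R) : R :=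
  match ik with
  | BPMI => inf [set mu x | x in C]
  | BSPMI => inf [set mu (xs i) | i in [set: 'I_n]]
  | BOI => inf [set ys i | i in [set: 'I_n]]
  end.

Definition improvement (xi : R) (f : pt -> R) (x : pt) : R := Num.max (xi - f x) 0.

Definition expected_improvement (xi : R) (mu sd : pt -> R) (x : pt) : R :=
  let z := (xi - mu x) / sd x in
  (xi - mu x) * std_normal_cdf z + sd x * std_normal_pdf z.

End GPDefs.

(* Write I - EI = (max(xi - f, 0) - max(xi - mu, 0)) + (max(xi - mu, 0) - EI).
   Since max(., 0) is 1-Lipschitz, on E^f(t) the first term is at most
   |f - mu| <= beta^(1/2) sigma.  With z = (xi - mu) / sigma the second term is
   sigma (max(z, 0) - z Phi(z) - phi(z)), and z Phi(z) + phi(z) - max(z, 0)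
   equals phi(w) - w Q(w) for w = |z| and the upper tail Q = 1 - Phi; by Mills'
   inequality w Q(w) <= phi(w) it lies in [0, phi(z)], and phi <= 1/sqrt(2 pi).
   Finally 1/sqrt(2 pi) <= 0.328 beta^(1/2) because beta >= 2 ln(16/3).
   The posterior deviation sigma is positive because k(x, x) = 1 and the
   noise variance is positive. *)

From HB Require Import structures.
From mathcomp Require Import all_boot all_order all_algebra.
From mathcomp Require Import all_classical all_reals all_analysis.
From mathcomp Require Import ring lra measurable_realfun.
Import Order.TTheory GRing.Theory Num.Theory.
Import numFieldNormedType.Exports.
Local Open Scope classical_set_scope.
Local Open Scope ring_scope.

Section StdNormal.
Context {R : realType}.
Notation phi := (@std_normal_pdf R).
Notation mu := (@lebesgue_measure R).
Local Open Scope ereal_scope.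

Lemma std_normal_pdfE : phi = normal_pdf 0 1.
Proof.
apply/funext => x; rewrite /normal_pdf oner_eq0 /normal_peak /normal_fun.
by rewrite /std_normal_pdf subr0 expr1n mul1r mulrC -[(pi *+ 2)%R]mulr_natl.
Qed.

Lemma std_normal_pdf_ge0 x : (0 <= phi x)%R.
Proof. by rewrite std_normal_pdfE normal_pdf_ge0. Qed.

Lemma std_normal_pdfN x : phi (- x) = phi x.
Proof. by rewrite /std_normal_pdf sqrrN. Qed.

Lemma continuous_std_normal_pdf : continuous phi.
Proof. by rewrite std_normal_pdfE; apply: continuous_normal_pdf; rewrite oner_eq0. Qed.

Lemma measurable_std_normal_pdf : measurable_fun setT phi.
Proof. by rewrite std_normal_pdfE; exact: measurable_normal_pdf. Qed.

Lemma measurable_EFin_std_normal_pdf (D : set R) :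
  measurable_fun D (fun x : R => (phi x)%:E).
Proof. by apply/measurable_EFinP; exact: measurable_funTS measurable_std_normal_pdf. Qed.

Lemma std_normal_pdf_le x : (phi x <= (Num.sqrt (2 * pi))^-1)%R.
Proof.
have sqrt2pi_gt0 : (0 < Num.sqrt (2 * pi) :> R)%R by rewrite sqrtr_gt0 mulr_gt0 ?pi_gt0.
rewrite /std_normal_pdf ler_pdivrMr // mulVf ?gt_eqF //.
by rewrite -expR0 ler_expR mulNr oppr_le0 divr_ge0 ?sqr_ge0.
Qed.

Lemma is_derive_std_normal_pdf (x : R) : is_derive x 1%R phi (- x * phi x)%R.
Proof.
have -> : phi = (fun u => expR (- u ^+ 2 / 2) * (Num.sqrt (2 * pi))^-1)%R by [].
apply: is_derive_eq; rewrite !scaler0 !(addr0, add0r) /GRing.scale /= !mulr1.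
by field; rewrite gt_eqF ?sqrtr_gt0 ?mulr_gt0 ?pi_gt0.
Qed.

Lemma cvgy_std_normal_pdf : phi x @[x --> +oo%R] --> 0%R.
Proof.
have -> : phi = (fun u => expR (- (u ^+ 2 * 2^-1)) * (Num.sqrt (2 * pi))^-1)%R.
  by apply/funext => u; rewrite /std_normal_pdf mulNr.
rewrite -(mul0r (Num.sqrt (2 * pi))^-1)%R; apply: cvgMr_tmp.
apply: (cvg_comp (fun x => x ^+ 2 * 2^-1)%R (fun x => expR (- x))); last exact: cvgr_expR.
by apply: gt0_cvgMly; [rewrite invr_gt0 | exact: cvgr_expr2].
Qed.

Lemma integral_std_normal_pdf_le1 (A : set R) : measurable A ->
  0 <= \int[mu]_(x in A) (phi x)%:E <= 1.
Proof.
move=> mA; rewrite integral_ge0 => [|x _]; last by rewrite lee_fin std_normal_pdf_ge0.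
rewrite -(integral_normal_pdf 0 1) -std_normal_pdfE.
apply: ge0_subset_integral => //; first exact: measurable_EFin_std_normal_pdf.
by move=> x _; rewrite lee_fin std_normal_pdf_ge0.
Qed.

Lemma integral_std_normal_pdf_fineK (A : set R) : measurable A ->
  (fine (\int[mu]_(x in A) (phi x)%:E))%:E = \int[mu]_(x in A) (phi x)%:E.
Proof.
move=> /integral_std_normal_pdf_le1 /andP[h0 h1].
by rewrite fineK // ge0_fin_numE // (le_lt_trans h1) ?ltry.
Qed.

Definition std_normal_ccdf (z : R) : R :=
  fine (\int[mu]_(u in `[z, +oo[) (phi u)%:E).

Lemma std_normal_ccdf_ge0 z : (0 <= std_normal_ccdf z)%R.
Proof.
have /andP[h0 _] := integral_std_normal_pdf_le1 _ (measurable_itv `[z, +oo[).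
exact: fine_ge0.
Qed.

Lemma std_normal_cdfE z : std_normal_cdf z = (1 - std_normal_ccdf z)%R.
Proof.
have : \int[mu]_(x in `]-oo, z]) (phi x)%:E + \int[mu]_(x in `[z, +oo[) (phi x)%:E = 1.
  rewrite -integral_itv_obnd_cbnd; last exact: measurable_EFin_std_normal_pdf.
  rewrite -ge0_integral_setU //; first last.
  - by rewrite -setCitvl; exact/disj_setPCl.
  - by move=> x _; rewrite lee_fin std_normal_pdf_ge0.
  - exact: measurable_EFin_std_normal_pdf.
  by rewrite -setCitvl setUv -(integral_normal_pdf 0 1) std_normal_pdfE.
rewrite -(integral_std_normal_pdf_fineK _ (measurable_itv `]-oo, z])).
rewrite -(integral_std_normal_pdf_fineK _ (measurable_itv `[z, +oo[)) -EFinD => -[<-].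
by rewrite /std_normal_cdf /std_normal_ccdf addrK.
Qed.

Lemma std_normal_cdfNccdf z : std_normal_cdf z = std_normal_ccdf (- z).
Proof.
rewrite /std_normal_cdf /std_normal_ccdf -{1}(opprK z) ge0_integration_by_substitutionNy.
- by congr fine; apply: eq_integral => x _; rewrite /= std_normal_pdfN.
- exact/continuous_subspaceT/continuous_std_normal_pdf.
- by move=> x _; exact: std_normal_pdf_ge0.
Qed.

(* [u phi u] is the derivative of [- phi]. *)
Lemma integral_id_mul_std_normal_pdf w : (0 <= w)%R ->
  \int[mu]_(u in `[w, +oo[) ((u * phi u)%R)%:E = (phi w)%:E.
Proof.
move=> w0.
have := @ge0_continuous_FTC2y R (fun u => u * phi u)%R (fun u => - phi u)%R w 0%R.
rewrite sub0e EFinN oppeK; apply.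
- by move=> x wx; rewrite mulr_ge0 ?std_normal_pdf_ge0 // (le_trans w0).
- apply: continuous_subspaceT => x.
  by apply: cvgM; [exact: cvg_id | exact: continuous_std_normal_pdf].
- by rewrite -oppr0; apply: cvgN; exact: cvgy_std_normal_pdf.
- by move=> x _; apply: ex_derive; apply: is_deriveN; exact: is_derive_std_normal_pdf.
- by apply: cvg_at_right_filter; apply: cvgN; exact: continuous_std_normal_pdf.
- move=> x _; rewrite derive1E deriveN; last first.
    by apply: ex_derive; exact: is_derive_std_normal_pdf.
  by rewrite (@derive_val _ _ _ _ _ _ _ (is_derive_std_normal_pdf x)) mulNr opprK.
Qed.

(* Mills' inequality: on [[w, +oo[], [w phi u <= u phi u]. *)
Lemma mulr_std_normal_ccdf_le w : (0 <= w)%R -> (w * std_normal_ccdf w <= phi w)%R.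
Proof.
move=> w0; rewrite -lee_fin EFinM integral_std_normal_pdf_fineK //.
rewrite -ge0_integralZl_EFin //; first last.
- exact: measurable_EFin_std_normal_pdf.
- by move=> x _; rewrite lee_fin std_normal_pdf_ge0.
rewrite -integral_id_mul_std_normal_pdf //; apply: ge0_le_integral => //.
- by move=> x _; rewrite lee_fin mulr_ge0 ?std_normal_pdf_ge0.
- by apply/measurable_EFinP; apply: measurable_funM => //; exact: measurable_funTS measurable_std_normal_pdf.
- by apply/measurable_EFinP; apply: measurable_funM => //; exact: measurable_funTS measurable_std_normal_pdf.
- by move=> x; rewrite /= in_itv /= andbT => wx; rewrite lee_fin ler_wpM2r ?std_normal_pdf_ge0.
Qed.

Lemma std_normal_EI_sub_max_le z :
  (`|z * std_normal_cdf z + phi z - Num.max z 0| <= phi z)%R.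
Proof.
have tail w : (0 <= w)%R -> (`|phi w - w * std_normal_ccdf w| <= phi w)%R.
  move=> w0; rewrite ger0_norm ?subr_ge0 ?mulr_std_normal_ccdf_le //.
  by rewrite lerBlDr lerDl mulr_ge0 ?std_normal_ccdf_ge0.
have [z0|z0] := leP 0%R z.
  by rewrite std_normal_cdfE (_ : _ - _ = phi z - z * std_normal_ccdf z)%R ?tail //; ring.
rewrite std_normal_cdfNccdf -[in leRHS]std_normal_pdfN -[phi z]std_normal_pdfN.
rewrite (_ : _ - _ = phi (- z) - - z * std_normal_ccdf (- z))%R ?tail //.
- by rewrite oppr_ge0 ltW.
- ring.
Qed.

End StdNormal.

Lemma big_ord_recl_eq {R : realType} {n} {F : 'I_n.+1 -> R} c (G : 'I_n -> R) :
  F ord0 = c -> (forall i, F (lift ord0 i) = G i) -> \sum_i F i = c + \sum_i G i.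
Proof. by move=> Fc FG; rewrite big_ord_recl Fc; congr (_ + _); apply: eq_bigr. Qed.

Section PsdKernel.
Context {R : realType} {T : Type} {k : T -> T -> R}.
Hypothesis psd_k : psd_kernel k.

(* The quadratic form of [k] at the points [x, xs 0, ..., xs (n-1)]
   with weights [c, a 0, ..., a (n-1)]. *)
Lemma psd_kernel_cons n (xs : 'I_n -> T) (a : 'I_n -> R) x c :
  0 <= c ^+ 2 * k x x + 2 * c * \sum_i a i * k (xs i) x
       + \sum_i \sum_j a i * a j * k (xs i) (xs j).
Proof.
case: psd_k => ksym psd.
pose xs' (i : 'I_n.+1) := if unlift ord0 i is Some j then xs j else x.
pose a' (i : 'I_n.+1) := if unlift ord0 i is Some j then a j else c.
have := psd n.+1 xs' a'.
rewrite (big_ord_recl_eq (c ^+ 2 * k x x + c * \sum_j a j * k (xs j) x)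
   (fun i => c * (a i * k (xs i) x) + \sum_j a i * a j * k (xs i) (xs j))).
- by rewrite big_split /= -mulr_sumr; lra.
- rewrite (big_ord_recl_eq (c ^+ 2 * k x x) (fun j => c * a j * k (xs j) x)).
  + by rewrite mulr_sumr; congr (_ + _); apply: eq_bigr => j _; ring.
  + by rewrite /a' /xs' unlift_none expr2.
  + by move=> j; rewrite /a' /xs' liftK unlift_none ksym.
move=> i; rewrite (big_ord_recl_eq (c * (a i * k (xs i) x))
   (fun j => a i * a j * k (xs i) (xs j))) //.
- by rewrite /a' /xs' liftK unlift_none mulrCA mulrA.
- by move=> j; rewrite /a' /xs' !liftK.
Qed.

Lemma psd_kernel_gram_qf_ge0 n (xs : 'I_n -> T) (u : 'rV[R]_n) :
  0 <= (u *m \matrix_(i, j) k (xs i) (xs j) *m u^T) ord0 ord0.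
Proof.
case: psd_k => _ psd.
suff -> : (u *m \matrix_(i, j) k (xs i) (xs j) *m u^T) ord0 ord0 =
    \sum_i \sum_j u ord0 i * u ord0 j * k (xs i) (xs j) by exact: psd.
rewrite mxE; under eq_bigr => j _ do rewrite mxE big_distrl /=.
rewrite exchange_big; apply: eq_bigr => i _; apply: eq_bigr => j _.
by rewrite !mxE mulrAC.
Qed.

End PsdKernel.

Section Posterior.
Context {R : realType} {d : nat} (k : 'rV[R]_d -> 'rV[R]_d -> R) (s2 : R).
Hypotheses (psd_k : psd_kernel k) (s2_gt0 : 0 < s2).

Lemma gram_add_scalar_unitmx n (xs : 'I_n -> 'rV[R]_d) : gram k xs + s2%:M \in unitmx.
Proof.
rewrite -row_free_unit -kermx_eq0; apply/eqP/row_matrixP => i; rewrite row0.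
set u := row i _; have : u *m (gram k xs + s2%:M) = 0 by apply/sub_kermxP; exact: row_sub.
move=> /(congr1 (fun A => (A *m u^T) ord0 ord0)).
rewrite /= mulmxDr mul_mx_scalar mulmxDl -scalemxAl mul0mx.
rewrite [X in X = _]mxE [X in _ + X = _]mxE [X in _ = X]mxE.
have -> : (u *m u^T) ord0 ord0 = \sum_j u ord0 j ^+ 2.
  by rewrite mxE; apply: eq_bigr => j _; rewrite !mxE expr2.
have := psd_kernel_gram_qf_ge0 psd_k _ xs u.
have : 0 <= \sum_j u ord0 j ^+ 2 by apply: sumr_ge0 => j _; exact: sqr_ge0.
rewrite /gram; set W := \sum_j _ => W_ge0 qf_ge0 qf0.
have /eqP W0 : W == 0 by rewrite eq_le W_ge0 -(pmulr_rle0 _ s2_gt0); lra.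
apply/rowP => j; rewrite [RHS]mxE; apply/eqP; rewrite -sqrf_eq0; apply/eqP.
by move/psumr_eq0P: W0 => -> // l _; exact: sqr_ge0.
Qed.

Lemma post_var_gt0 n (xs : 'I_n -> 'rV[R]_d) x : 0 < k x x -> 0 < post_var k s2 xs x.
Proof.
move=> kxx_gt0.
set v := invmx (gram k xs + s2%:M) *m kvec k xs x.
have gram_v i : \sum_j k (xs i) (xs j) * v j ord0 = k (xs i) x - s2 * v i ord0.
  have : (gram k xs + s2%:M) *m v = kvec k xs x by rewrite mulKVmx ?gram_add_scalar_unitmx.
  move=> /(congr1 (fun A : 'cV[R]_n => A i ord0)); rewrite /= mulmxDl mul_scalar_mx.
  rewrite [X in X = _]mxE [X in _ + X = _]mxE [X in _ = X]mxE mxE => <-.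
  by rewrite addrK; apply: eq_bigr => j _; rewrite [in RHS]mxE.
set S := \sum_i k (xs i) x * v i ord0.
have varE : post_var k s2 xs x = k x x - S.
  rewrite /post_var -mulmxA -/v mxE; congr (_ - _); apply: eq_bigr => j _.
  by rewrite !mxE.
have qfE : \sum_i \sum_j v i ord0 * v j ord0 * k (xs i) (xs j)
    = S - s2 * \sum_i v i ord0 ^+ 2.
  rewrite mulr_sumr -sumrB; apply: eq_bigr => i _.
  transitivity (v i ord0 * \sum_j k (xs i) (xs j) * v j ord0).
    by rewrite mulr_sumr; apply: eq_bigr => j _; ring.
  by rewrite gram_v; ring.
(* With weights [-1, v], positive semidefiniteness gives [post_var >= s2 * |v|^2]. *)
have := psd_kernel_cons psd_k _ xs (fun i => v i ord0) x (-1).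
rewrite qfE -/S varE (_ : \sum_i v i ord0 * k (xs i) x = S); last first.
  by apply: eq_bigr => i _; rewrite mulrC.
have [v0|v_neq0] := eqVneq (\sum_i v i ord0 ^+ 2) 0.
  have vi0 i : v i ord0 = 0.
    apply/eqP; rewrite -sqrf_eq0; apply/eqP.
    by move/psumr_eq0P: v0 => -> // j _; exact: sqr_ge0.
  by rewrite /S big1 ?subr0 // => i _; rewrite vi0 mulr0.
have : 0 < \sum_i v i ord0 ^+ 2.
  by rewrite lt_def v_neq0 sumr_ge0 // => i _; exact: sqr_ge0.
move=> /(mulr_gt0 s2_gt0); lra.
Qed.

End Posterior.

Section ExpectedImprovement.
Context {R : realType} {d : nat}.
Implicit Types (xi : R) (f mu sd : 'rV[R]_d -> R).

Lemma max0_sub_expected_improvement_le xi mu sd x : 0 < sd x ->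
  `|Num.max (xi - mu x) 0 - expected_improvement xi mu sd x|
    <= sd x * std_normal_pdf ((xi - mu x) / sd x).
Proof.
move=> sd_gt0; rewrite /expected_improvement; set z := (xi - mu x) / sd x.
have -> : xi - mu x = sd x * z by rewrite /z mulrCA divff ?gt_eqF ?mulr1.
have -> : Num.max (sd x * z) 0 = sd x * Num.max z 0 by rewrite maxr_pMr ?ltW ?mulr0.
rewrite -mulrA -mulrDr -mulrBr normrM gtr0_norm //.
by rewrite ler_pM2l // distrC std_normal_EI_sub_max_le.
Qed.

Lemma ler_dist_max0 (a b : R) : `|Num.max a 0 - Num.max b 0| <= `|a - b|.
Proof.
have := ler_norm (a - b); have := ler_norm (b - a); rewrite distrC => h1 h2.
by rewrite ler_norml; case: (leP a 0); case: (leP b 0) => *; apply/andP; split; lra.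
Qed.

Lemma improvement_sub_expected_improvement_le xi f mu sd x b :
  0 < sd x -> `|f x - mu x| <= b * sd x ->
  `|improvement xi f x - expected_improvement xi mu sd x|
    <= b * sd x + sd x / Num.sqrt (2 * pi).
Proof.
move=> sd_gt0 fmu_le; rewrite /improvement.
rewrite -(subrKA (Num.max (xi - mu x) 0)); apply: le_trans (ler_normD _ _) _.
apply: lerD.
  by apply: le_trans (ler_dist_max0 _ _) _; rewrite opprB addrC addrA subrK distrC.
apply: le_trans (max0_sub_expected_improvement_le _ _ _ _ sd_gt0) _.
by rewrite ler_pM2l // std_normal_pdf_le.
Qed.

End ExpectedImprovement.

Section NumericBounds.
Context {R : realType}.

Lemma expR_inv5_le : expR (5%:R^-1 : R) <= 5%:R / 4%:R.
Proof.
have := expR_ge1Dx (- 5%:R^-1 : R); rewrite expRN => inv_ge.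
rewrite -(invrK (expR _)) -[X in _ <= X]invf_div lef_pV2 ?posrE ?divr_gt0 ?invr_gt0 ?expR_gt0 //.
by move: inv_ge; rewrite (_ : 1 - 5%:R^-1 = 4%:R / 5%:R :> R) //; field.
Qed.

Lemma ln_ge_7_5 (y : R) : 16%:R / 3%:R <= y -> 7%:R / 5%:R <= ln y.
Proof.
move=> y_ge; have y_gt0 : 0 < y by apply: lt_le_trans y_ge; rewrite divr_gt0.
rewrite -[X in X <= _]expRK ler_ln ?posrE ?expR_gt0 //; apply: le_trans y_ge.
rewrite expRM_natl; apply: le_trans (_ : (5%:R / 4%:R) ^+ 7 <= _).
  by rewrite lerXn2r ?nnegrE ?expR_ge0 ?divr_ge0 // expR_inv5_le.
rewrite !exprS expr0; lra.
Qed.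

Lemma inv_sqrt2pi_le_sqrt_2ln (y : R) : 16%:R / 3%:R <= y ->
  (Num.sqrt (2 * pi))^-1 <= 328%:R / 1000%:R * Num.sqrt (2 * ln y).
Proof.
move=> /ln_ge_7_5 ln_ge; have pi_ge2 : 2 <= pi :> R := @pi_ge2 R.
have sqrt2pi_gt0 : 0 < Num.sqrt (2 * pi) :> R by rewrite sqrtr_gt0 mulr_gt0 ?pi_gt0.
rewrite -[_^-1]mul1r ler_pdivrMr // -(mulrA (328%:R / 1000%:R)) -sqrtrM; last lra.
have : (33%:R / 10%:R) ^+ 2 <= 2 * ln y * (2 * pi) by rewrite expr2; nra.
rewrite -ler_sqrt ?sqrtr_sqr; last by rewrite mulr_ge0 //; lra.
rewrite ger0_norm ?divr_ge0 //; nra.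
Qed.

Lemma beta_arg_ge (N t : nat) (delta : R) : (0 < N)%N -> (1 <= t)%N -> 0 < delta < 1 ->
  16%:R / 3%:R <= 8 * N%:R * (pi ^+ 2 * t%:R ^+ 2 / 6) / delta.
Proof.
move=> N_gt0 t_ge1 /andP[delta_gt0 delta_lt1].
have pi_ge2 : 2 <= pi :> R := @pi_ge2 R.
have N_ge1R : 1 <= N%:R :> R by rewrite ler1n.
have t_ge1R : 1 <= t%:R :> R by rewrite ler1n.
have : 1 * (4 * 1) <= N%:R * (pi ^+ 2 * t%:R ^+ 2) :> R.
  by rewrite ler_pM // ?ler_pM // ?expr2; nra.
move=> Npt_ge; apply: le_trans (_ : _ <= 8 * N%:R * (pi ^+ 2 * t%:R ^+ 2 / 6)) _; first lra.
by rewrite ler_pdivlMr // ler_piMr ?ltW //; lra.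
Qed.

End NumericBounds.

Theorem mainTheorem16 (R : realType) (d : nat) (r : R) (C : set 'rV[R]_d)
  (k : 'rV[R]_d -> 'rV[R]_d -> R) (f : 'rV[R]_d -> R) (L : R)
  (s2 : R) (t : nat) (xs : 'I_t.-1 -> 'rV[R]_d) (eps : 'I_t.-1 -> R)
  (ik : incumbent_kind) (Ct : seq 'rV[R]_d) (delta : R) :
  (1 <= d)%N -> 0 < r ->
  compact C -> (forall x, C x -> forall i, 0 <= x ord0 i <= r) ->
  psd_kernel k ->
  (forall x x', C x -> C x' -> k x x' <= 1) ->
  (forall x, C x -> k x x = 1) ->
  1 / (r * d%:R) <= L ->
  (forall x x', C x -> C x' -> `|f x - f x'| <= L * l1norm (x - x')) ->
  0 < s2 ->
  (1 <= t)%N ->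
  (ik <> BPMI -> (2 <= t)%N) ->
  (forall i, C (xs i)) ->
  {subset Ct <= C} -> uniq Ct ->
  (size Ct)%:R = (L * r * d%:R * (t%:R) ^+ 2) ^+ d ->
  0 < delta < 1 ->
  let ys := fun i => f (xs i) + eps i in
  let mu := post_mean k s2 xs ys in
  let sd := post_sd k s2 xs in
  let xi := incumbent ik C mu xs ys in
  let pit := pi ^+ 2 * (t%:R) ^+ 2 / 6 in
  let beta := 2 * ln (8 * (size Ct)%:R * pit / delta) in
  (* the event E^f(t) *)
  (forall x, x \in Ct -> `|f x - mu x| <= Num.sqrt beta * sd x) ->
  forall x, x \in Ct ->
    `|improvement xi f x - expected_improvement xi mu sd x|
      <= (1328%:R / 1000%:R) * Num.sqrt beta * sd x.
Proof.
move=> _ _ _ _ psd_k _ kdiag _ _ s2_gt0 t_ge1 _ _ CtC _ _ delta01.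
move=> ys mu sd xi pit beta Ef x xCt.
have sd_gt0 : 0 < sd x.
  by rewrite sqrtr_gt0 post_var_gt0 // kdiag ?ltr01 //; exact/set_mem/CtC.
have Ct_gt0 : (0 < size Ct)%N by case: (Ct) xCt.
apply: le_trans (improvement_sub_expected_improvement_le _ _ _ _ _ _ sd_gt0 (Ef x xCt)) _.
have -> : 1328%:R / 1000%:R * Num.sqrt beta * sd x
    = Num.sqrt beta * sd x + sd x * (328%:R / 1000%:R * Num.sqrt beta) by field.
rewrite lerD2l ler_pM2l //.
exact/inv_sqrt2pi_le_sqrt_2ln/beta_arg_ge.
Qed.
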